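(* Let ${\bf R}=(R_1,\dots,R_d)\in\mathbb R_+^d$, $p=\max\{\frac12,R_1,\dots,R_d\}$, $g({\bf R})=\frac{1}{1/R_1+\cdots+1/R_d}$, $b_{\bf R}=\big(\sum_{j=1}^d(1/2)^{2R_j}\big)^{1/(2p)}$, and for $m\in\mathbb N$ let $C(m,{\bf R},d)=\#\{{\bf k}\in\mathbb Z^d:\sum_{j=1}^d|k_j|^{2R_j}\le m^{2p}\}$. Then for every $m\in\mathbb N$, $$\big((m-b_{\bf R})_+\big)^{p/g({\bf R})}\mathrm{vol}(B^d_{2{\bf R}})\le C(m,{\bf R},d)\le (m+b_{\bf R})^{p/g({\bf R})}\mathrm{vol}(B^d_{2{\bf R}}),$$ where $a_+=\max\{a,0\}$.
   Context: $B^d_{2{\bf R}}=\{{\bf x}\in\mathbb R^d:\sum_{j=1}^d|x_j|^{2R_j}\le1\}$ and vol is Lebesgue measure on $\mathbb R^d$. *)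

From Stdlib Require Import Reals Lra List ZArith.
Open Scope R_scope.

Fixpoint sumd (d : nat) (f : nat -> R) : R :=
  match d with O => 0 | S n => sumd n f + f n end.
Fixpoint prodd (d : nat) (f : nat -> R) : R :=
  match d with O => 1 | S n => prodd n f * f n end.
Fixpoint maxd (d : nat) (f : nat -> R) : R :=
  match d with O => / 2 | S n => Rmax (maxd n f) (f n) end.

(* real power x^y for x >= 0, with the convention 0^y = 0 (y > 0) *)
Definition rpow (x y : R) : R :=
  if Req_EM_T x 0 then 0 else Rpower x y.

(* points of R^d are functions nat -> R, only coordinates 0..d-1 matter *)
Definition in_box (d : nat) (a b x : nat -> R) : Prop :=
  forall j, (j < d)%nat -> a j <= x j <= b j.
Definition box_vol (d : nat) (a b : nat -> R) : R :=
  prodd d (fun j => b j - a j).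

Definition cover_sum (d : nat) (A : (nat -> R) -> Prop) (s : R) : Prop :=
  exists a b : nat -> nat -> R,
    (forall n j, (j < d)%nat -> a n j <= b n j) /\
    (forall x, A x -> exists n, in_box d (a n) (b n) x) /\
    infinite_sum (fun n => box_vol d (a n) (b n)) s.

(* v is the Lebesgue (outer) measure of A in R^d: the infimum of cover sums *)
Definition lebesgue_measure (d : nat) (A : (nat -> R) -> Prop) (v : R) : Prop :=
  (forall s, cover_sum d A s -> v <= s) /\
  (forall w, (forall s, cover_sum d A s -> w <= s) -> w <= v).

Definition ball2R (d : nat) (Rv : nat -> R) (x : nat -> R) : Prop :=
  sumd d (fun j => rpow (Rabs (x j)) (2 * Rv j)) <= 1.

Definition pR (d : nat) (Rv : nat -> R) : R := maxd d Rv.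
Definition gR (d : nat) (Rv : nat -> R) : R := / sumd d (fun j => / Rv j).
Definition bR (d : nat) (Rv : nat -> R) : R :=
  rpow (sumd d (fun j => rpow (/ 2) (2 * Rv j))) (/ (2 * pR d Rv)).

Definition latset (d : nat) (Rv : nat -> R) (m : nat) (k : list Z) : Prop :=
  length k = d /\
  sumd d (fun j => rpow (Rabs (IZR (nth j k 0%Z))) (2 * Rv j))
    <= rpow (INR m) (2 * pR d Rv).

Definition has_card (P : list Z -> Prop) (n : nat) : Prop :=
  exists l : list (list Z), NoDup l /\ length l = n /\ forall k, In k l <-> P k.

(* Write |x| = (sum_j |x_j|^(2 R_j))^(1/(2p)), so that B^d_{2R} = {|x| <= 1}. Since 2 R_j <= 2p,
   the substitution A_j = |x_j|^(R_j/p) turns |.| into an l^(2p) norm, and subadditivity of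
   t -> t^(R_j/p) gives the triangle inequality |x + y| <= |x| + |y|. The dilation
   D_mu x = (mu^(p/R_j) x_j)_j satisfies |D_mu x| = mu |x| and has Jacobian mu^(p/g(R)), and
   every vector of the cube [-1/2, 1/2]^d has |.| <= b_R.
   Rounding D_mu x to the nearest lattice point shows that for mu = m - b_R the ball is covered
   by the C(m,R,d) cells D_mu^-1 (k + [-1/2, 1/2]^d) with |k| <= m; for mu = m + b_R these cells
   lie inside the ball and are disjoint. Both bounds follow by comparing with the volume
   mu^(-p/g(R)) of a cell; the lower bound on the outer measure needs finite additivity of box
   volume (proved by counting points of a fine grid) and Heine-Borel for boxes. *)

From Stdlib Require Import Reals Lra Lia List ZArith ClassicalEpsilon Classical.
Open Scope R_scope.

(** * Real powers *)

Lemma rpow_0 y : rpow 0 y = 0.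
Proof. unfold rpow; destruct (Req_EM_T 0 0); lra. Qed.

Lemma rpow_pos x y : 0 < x -> rpow x y = Rpower x y.
Proof. intro H; unfold rpow; destruct (Req_EM_T x 0); [lra | auto]. Qed.

Lemma rpow_gt0 x y : 0 < x -> 0 < rpow x y.
Proof. intro H; rewrite rpow_pos by lra; apply exp_pos. Qed.

Lemma rpow_ge0 x y : 0 <= rpow x y.
Proof. unfold rpow; destruct (Req_EM_T x 0); [lra | left; apply exp_pos]. Qed.

Lemma rpow_eq0 x y : 0 <= x -> rpow x y = 0 -> x = 0.
Proof. intros. destruct (Req_dec x 0); auto. pose proof (rpow_gt0 x y). lra. Qed.

Lemma rpow_1 x : 0 <= x -> rpow x 1 = x.
Proof.
  intro H; destruct (Req_dec x 0) as [->|]; [apply rpow_0|].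
  rewrite rpow_pos by lra; apply Rpower_1; lra.
Qed.

Lemma rpow_1l y : rpow 1 y = 1.
Proof. rewrite rpow_pos by lra. unfold Rpower. rewrite ln_1, Rmult_0_r. apply exp_0. Qed.

Lemma rpow_mul x y z : 0 <= x -> 0 <= y -> rpow (x * y) z = rpow x z * rpow y z.
Proof.
  intros Hx Hy.
  destruct (Req_dec x 0) as [->|]; [rewrite Rmult_0_l, !rpow_0; lra|].
  destruct (Req_dec y 0) as [->|]; [rewrite Rmult_0_r, !rpow_0; lra|].
  rewrite !rpow_pos by (try apply Rmult_lt_0_compat; lra).
  rewrite Rpower_mult_distr; lra.
Qed.

Lemma rpow_rpow x y z : 0 <= x -> rpow (rpow x y) z = rpow x (y * z).
Proof.
  intros Hx. destruct (Req_dec x 0) as [->|]; [rewrite !rpow_0; lra|].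
  rewrite (rpow_pos x y), rpow_pos, rpow_pos by (try apply exp_pos; lra).
  apply Rpower_mult.
Qed.

Lemma rpow_plus x y z : 0 < x -> rpow x (y + z) = rpow x y * rpow x z.
Proof. intros; rewrite !rpow_pos by lra; apply Rpower_plus. Qed.

Lemma rpow_inv x y : 0 < x -> rpow (/ x) y = / rpow x y.
Proof.
  intros Hx. pose proof (rpow_gt0 x y Hx).
  assert (E : rpow (/ x) y * rpow x y = 1).
  { rewrite <- rpow_mul, Rinv_l by (try left; try apply Rinv_0_lt_compat; lra).
    apply rpow_1l. }
  apply (Rmult_eq_reg_r (rpow x y)); [rewrite E, Rinv_l |]; lra.
Qed.

Lemma rpow_div x y z : 0 <= x -> 0 < y -> rpow (x / y) z = rpow x z / rpow y z.
Proof.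
  intros. unfold Rdiv.
  rewrite rpow_mul, rpow_inv; auto; left; apply Rinv_0_lt_compat; auto.
Qed.

Lemma rpow_le x y z : 0 < z -> 0 <= x <= y -> rpow x z <= rpow y z.
Proof.
  intros Hz [Hx Hxy].
  destruct (Req_dec x 0) as [->|]; [rewrite rpow_0; apply rpow_ge0|].
  rewrite !rpow_pos by lra. apply Rle_Rpower_l; lra.
Qed.

Lemma rpow_lt x y z : 0 < z -> 0 <= x < y -> rpow x z < rpow y z.
Proof.
  intros Hz [Hx Hxy].
  destruct (Req_dec x 0) as [->|]; [rewrite rpow_0; apply rpow_gt0; lra|].
  rewrite !rpow_pos by lra. apply Rlt_Rpower_l; lra.
Qed.

Lemma rpow_le_inv x y z : 0 < z -> 0 <= x -> 0 <= y -> rpow x z <= rpow y z -> x <= y.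
Proof.
  intros Hz Hx Hy H. destruct (Rle_lt_dec x y); auto.
  assert (rpow y z < rpow x z) by (apply rpow_lt; lra). lra.
Qed.

Lemma rpow_le_iff x y z : 0 < z -> 0 <= x -> 0 <= y -> (rpow x z <= y <-> x <= rpow y (/ z)).
Proof.
  intros Hz Hx Hy.
  assert (Ey : rpow (rpow y (/ z)) z = y).
  { rewrite rpow_rpow, Rinv_l by lra. apply rpow_1; auto. }
  split; intro H.
  - apply (rpow_le_inv _ _ z); auto. apply rpow_ge0. lra.
  - rewrite <- Ey. apply rpow_le; auto.
Qed.

Lemma rpow_le_exp_anti x a b : 0 < x <= 1 -> a <= b -> rpow x b <= rpow x a.
Proof.
  intros Hx Hab. rewrite !rpow_pos by lra. unfold Rpower.
  assert (ln x <= 0).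
  { destruct (Req_dec x 1) as [->|]; [rewrite ln_1; lra|].
    left; rewrite <- ln_1; apply ln_increasing; lra. }
  destruct (Req_dec (b * ln x) (a * ln x)) as [E|]; [rewrite E; lra|].
  left; apply exp_increasing; nra.
Qed.

(* Weighted AM-GM: both sides are compared with the tangent of [exp] at [s ln v]. *)
Lemma rpow_le_affine v s : 0 < v -> 0 <= s <= 1 -> rpow v s <= s * v + (1 - s).
Proof.
  intros Hv Hs. rewrite rpow_pos by lra. unfold Rpower.
  set (L := ln v). set (z := s * L).
  assert (tangent_exp : forall u, exp u >= exp z * (1 + u - z)).
  { intro u. replace u with (z + (u - z)) at 1 by ring. rewrite exp_plus.
    pose proof (exp_ineq1_le (u - z)). pose proof (exp_pos z). nra. }
  pose proof (tangent_exp L) as H1. pose proof (tangent_exp 0) as H0.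
  rewrite exp_0 in H0. unfold L in H1 at 1; rewrite exp_ln in H1 by lra.
  assert (s * (exp z * (1 + L - z)) + (1 - s) * (exp z * (1 + 0 - z)) = exp z)
    by (unfold z; ring).
  nra.
Qed.

Lemma bernoulli_rpow u r : 0 < u -> 1 <= r -> 1 + r * (u - 1) <= rpow u r.
Proof.
  intros Hu Hr. set (v := rpow u r). assert (Hv : 0 < v) by (apply rpow_gt0; lra).
  assert (Hs : 0 <= / r <= 1).
  { split; [left; apply Rinv_0_lt_compat; lra|].
    rewrite <- Rinv_1. apply Rinv_le_contravar; lra. }
  pose proof (rpow_le_affine v (/ r) Hv Hs) as H. unfold v in H.
  rewrite rpow_rpow, Rinv_r, rpow_1 in H by lra. fold v in H.
  assert (r * u <= r * (/ r * v + (1 - / r))) by (apply Rmult_le_compat_l; lra).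
  replace (r * (/ r * v + (1 - / r))) with (v + r - 1) in H0 by (field; lra). lra.
Qed.

Lemma rpow_tangent_le t z r : 0 <= t -> 0 < z -> 1 <= r ->
  rpow z r + r * rpow z (r - 1) * (t - z) <= rpow t r.
Proof.
  intros Ht Hz Hr.
  assert (Ezr : rpow z r = rpow z (r - 1) * z).
  { replace r with ((r - 1) + 1) at 1 by ring. rewrite rpow_plus, rpow_1 by lra. auto. }
  pose proof (rpow_gt0 z (r - 1) Hz) as Hp.
  destruct (Req_dec t 0) as [->|Ht0].
  - rewrite rpow_0, Ezr.
    assert (0 <= rpow z (r - 1) * z * (r - 1)) by (apply Rmult_le_pos; [nra | lra]). nra.
  - assert (Htz : 0 < t / z) by (apply Rdiv_lt_0_compat; lra).
    pose proof (bernoulli_rpow (t / z) r Htz Hr) as B.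
    rewrite rpow_div in B by lra.
    assert (Hzr : 0 < rpow z r) by (apply rpow_gt0; lra).
    apply (Rmult_le_compat_r (rpow z r)) in B; [|lra].
    replace (rpow t r / rpow z r * rpow z r) with (rpow t r) in B by (field; lra).
    replace ((1 + r * (t / z - 1)) * rpow z r) with (rpow z r + r * rpow z (r - 1) * (t - z)) in B;
      [auto | rewrite Ezr; field; lra].
Qed.

Lemma rpow_convex x y l r : 0 <= x -> 0 <= y -> 0 <= l <= 1 -> 1 <= r ->
  rpow (l * x + (1 - l) * y) r <= l * rpow x r + (1 - l) * rpow y r.
Proof.
  intros Hx Hy Hl Hr. set (z := l * x + (1 - l) * y).
  pose proof (rpow_ge0 x r). pose proof (rpow_ge0 y r).
  destruct (Req_dec z 0) as [E|E]; [rewrite E, rpow_0; nra|].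
  assert (Hz : 0 < z) by (unfold z in *; nra).
  pose proof (rpow_tangent_le x z r Hx Hz Hr). pose proof (rpow_tangent_le y z r Hy Hz Hr).
  set (K := r * rpow z (r - 1)) in *.
  assert (l * (rpow z r + K * (x - z)) + (1 - l) * (rpow z r + K * (y - z)) = rpow z r)
    by (unfold z; ring).
  nra.
Qed.

Lemma rpow_ge_self x a : 0 <= x <= 1 -> 0 < a <= 1 -> x <= rpow x a.
Proof.
  intros Hx Ha. destruct (Req_dec x 0) as [->|]; [rewrite rpow_0; lra|].
  rewrite <- (rpow_1 x) at 1 by lra. apply rpow_le_exp_anti; lra.
Qed.

Lemma rpow_subadditive a b al : 0 <= a -> 0 <= b -> 0 < al <= 1 ->
  rpow (a + b) al <= rpow a al + rpow b al.
Proof.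
  intros Ha Hb Hal. destruct (Req_dec (a + b) 0) as [E|E].
  { replace a with 0 in * by lra. replace b with 0 in * by lra.
    rewrite Rplus_0_l, !rpow_0; lra. }
  assert (Hs : 0 < a + b) by lra.
  assert (K : forall c, 0 <= c <= a + b -> rpow (a + b) al * (c / (a + b)) <= rpow c al).
  { intros c Hc. replace c with ((a + b) * (c / (a + b))) at 2 by (field; lra).
    assert (0 <= c / (a + b)) by (apply Rmult_le_pos; [|left; apply Rinv_0_lt_compat]; lra).
    rewrite rpow_mul by lra.
    apply Rmult_le_compat_l; [apply rpow_ge0|]. apply rpow_ge_self; auto.
    split; auto. apply Rmult_le_reg_r with (a + b); auto.
    unfold Rdiv; rewrite Rmult_assoc, Rinv_l; lra. }
  pose proof (K a ltac:(lra)). pose proof (K b ltac:(lra)).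
  assert (rpow (a + b) al * (a / (a + b)) + rpow (a + b) al * (b / (a + b)) = rpow (a + b) al)
    by (field; lra).
  lra.
Qed.

(** * Minkowski's inequality *)

Lemma sumd_ext d f g : (forall j, (j < d)%nat -> f j = g j) -> sumd d f = sumd d g.
Proof. induction d; simpl; intros H; auto. rewrite IHd, (H d); auto; intros; apply H; lia. Qed.

Lemma sumd_le d f g : (forall j, (j < d)%nat -> f j <= g j) -> sumd d f <= sumd d g.
Proof.
  induction d; simpl; intros H; [lra|].
  assert (sumd d f <= sumd d g) by (apply IHd; intros; apply H; lia).
  assert (f d <= g d) by (apply H; lia). lra.
Qed.

Lemma sumd_ge0 d f : (forall j, (j < d)%nat -> 0 <= f j) -> 0 <= sumd d f.
Proof.
  induction d; simpl; intros H; [lra|].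
  assert (0 <= sumd d f) by (apply IHd; intros; apply H; lia).
  assert (0 <= f d) by (apply H; lia). lra.
Qed.

Lemma sumd_scal d c f : sumd d (fun j => c * f j) = c * sumd d f.
Proof. induction d; simpl; [ring|]. rewrite IHd; ring. Qed.

Lemma sumd_plus d f g : sumd d (fun j => f j + g j) = sumd d f + sumd d g.
Proof. induction d; simpl; [ring|]. rewrite IHd; ring. Qed.

Lemma sumd_term_le d f k : (forall j, (j < d)%nat -> 0 <= f j) -> (k < d)%nat -> f k <= sumd d f.
Proof.
  induction d; simpl; intros H Hk; [lia|].
  assert (0 <= sumd d f) by (apply sumd_ge0; intros; apply H; lia).
  assert (0 <= f d) by (apply H; lia).
  destruct (Nat.eq_dec k d) as [->|]; [lra|].
  assert (f k <= sumd d f) by (apply IHd; intros; try apply H; lia). lra.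
Qed.

Definition lp_norm (d : nat) (r : R) (A : nat -> R) : R :=
  rpow (sumd d (fun j => rpow (A j) r)) (/ r).

Section Minkowski.

Variables (d : nat) (r : R).
Hypothesis Hr : 1 <= r.

Lemma lp_norm_ge0 A : 0 <= lp_norm d r A.
Proof. apply rpow_ge0. Qed.

Lemma lp_norm_pow A : rpow (lp_norm d r A) r = sumd d (fun j => rpow (A j) r).
Proof.
  unfold lp_norm.
  rewrite rpow_rpow, Rinv_l, rpow_1 by (try lra; apply sumd_ge0; intros; apply rpow_ge0). auto.
Qed.

Lemma lp_norm_eq0 A : (forall j, (j < d)%nat -> 0 <= A j) ->
  lp_norm d r A = 0 -> forall j, (j < d)%nat -> A j = 0.
Proof.
  intros HA H0 j Hj. apply (rpow_eq0 _ r); auto.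
  assert (Hs : sumd d (fun j => rpow (A j) r) = 0) by (rewrite <- lp_norm_pow, H0, rpow_0; auto).
  pose proof (sumd_term_le d (fun j => rpow (A j) r) j) as Hle.
  pose proof (rpow_ge0 (A j) r).
  assert (rpow (A j) r <= 0) by (rewrite <- Hs; apply Hle; auto; intros; apply rpow_ge0). lra.
Qed.

Lemma lp_norm_ext A B : (forall j, (j < d)%nat -> A j = B j) -> lp_norm d r A = lp_norm d r B.
Proof. intros H. unfold lp_norm. f_equal. apply sumd_ext. intros j Hj. rewrite H; auto. Qed.

Lemma minkowski A B : (forall j, (j < d)%nat -> 0 <= A j) -> (forall j, (j < d)%nat -> 0 <= B j) ->
  lp_norm d r (fun j => A j + B j) <= lp_norm d r A + lp_norm d r B.
Proof.
  intros HA HB. set (SA := lp_norm d r A). set (SB := lp_norm d r B).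
  assert (SA0 : 0 <= SA) by apply lp_norm_ge0. assert (SB0 : 0 <= SB) by apply lp_norm_ge0.
  destruct (Req_dec SA 0) as [ZA|ZA].
  { rewrite ZA, Rplus_0_l. right. apply lp_norm_ext. intros j Hj.
    rewrite (lp_norm_eq0 A HA ZA j Hj). ring. }
  destruct (Req_dec SB 0) as [ZB|ZB].
  { rewrite ZB, Rplus_0_r. right. apply lp_norm_ext. intros j Hj.
    rewrite (lp_norm_eq0 B HB ZB j Hj). ring. }
  set (S := SA + SB). assert (HS : 0 < S) by (unfold S; lra).
  set (l := SA / S).
  assert (Hl : 0 <= l <= 1).
  { unfold l; split; [apply Rmult_le_pos; [|left; apply Rinv_0_lt_compat]; lra|].
    apply Rmult_le_reg_r with S; auto. unfold Rdiv; rewrite Rmult_assoc, Rinv_l; unfold S; lra. }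
  assert (HAr : rpow SA r = sumd d (fun j => rpow (A j) r)) by (apply lp_norm_pow).
  assert (HBr : rpow SB r = sumd d (fun j => rpow (B j) r)) by (apply lp_norm_pow).
  (* (A+B)/S is the convex combination l (A/SA) + (1-l) (B/SB) of unit vectors *)
  assert (Hterm : forall j, (j < d)%nat -> rpow (A j + B j) r / rpow S r <=
     l * (rpow (A j) r / rpow SA r) + (1 - l) * (rpow (B j) r / rpow SB r)).
  { intros j Hj. pose proof (HA j Hj). pose proof (HB j Hj).
    rewrite <- !rpow_div by lra.
    replace ((A j + B j) / S) with (l * (A j / SA) + (1 - l) * (B j / SB)) by (unfold l, S; field; lra).
    apply rpow_convex; auto; apply Rmult_le_pos; auto; left; apply Rinv_0_lt_compat; lra. }
  assert (HSr : 0 < rpow S r) by (apply rpow_gt0; auto).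
  assert (HAr0 : 0 < rpow SA r) by (apply rpow_gt0; lra).
  assert (HBr0 : 0 < rpow SB r) by (apply rpow_gt0; lra).
  assert (Hsum : sumd d (fun j => rpow (A j + B j) r) <= rpow S r).
  { apply (Rmult_le_reg_r (/ rpow S r)); [apply Rinv_0_lt_compat; auto|].
    rewrite Rinv_r, Rmult_comm, <- sumd_scal by lra.
    eapply Rle_trans; [apply sumd_le; intros j Hj; rewrite Rmult_comm; apply (Hterm j Hj)|].
    rewrite sumd_plus. unfold Rdiv. rewrite !sumd_scal.
    rewrite (sumd_ext d _ (fun j => / rpow SA r * rpow (A j) r)) by (intros; ring).
    rewrite (sumd_ext d (fun j => rpow (B j) r * _) (fun j => / rpow SB r * rpow (B j) r))
      by (intros; ring).
    rewrite !sumd_scal, <- HAr, <- HBr, !Rinv_l by lra. lra. }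
  unfold lp_norm at 1. fold S. apply rpow_le_iff; auto.
  - apply Rinv_0_lt_compat; lra.
  - apply sumd_ge0. intros; apply rpow_ge0.
  - lra.
  - rewrite Rinv_inv. auto.
Qed.

End Minkowski.

(** * The gauge of the ball *)

Lemma maxd_ge d f : / 2 <= maxd d f /\ forall j, (j < d)%nat -> f j <= maxd d f.
Proof.
  induction d as [|d [H1 H2]]; simpl; [split; [lra | intros; lia]|].
  split; [eapply Rle_trans; [apply H1 | apply Rmax_l]|].
  intros j Hj. destruct (Nat.eq_dec j d) as [->|]; [apply Rmax_r|].
  eapply Rle_trans; [apply H2; lia | apply Rmax_l].
Qed.

Lemma bR_ge0 d Rv : 0 <= bR d Rv.
Proof. apply rpow_ge0. Qed.

Definition ballsum (d : nat) (Rv : nat -> R) (y : nat -> R) : R :=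
  sumd d (fun j => rpow (Rabs (y j)) (2 * Rv j)).

(* The quasi-norm whose unit ball is [ball2R d Rv]; the exponent [1/(2p)] makes it subadditive. *)
Definition gauge (d : nat) (Rv : nat -> R) (y : nat -> R) : R :=
  rpow (ballsum d Rv y) (/ (2 * pR d Rv)).

Section Gauge.

Variables (d : nat) (Rv : nat -> R).
Hypothesis HR : forall j, (j < d)%nat -> 0 < Rv j.

Let P := pR d Rv.

Lemma pR_ge_half : / 2 <= P.
Proof. apply maxd_ge. Qed.

Lemma Rv_le_pR j : (j < d)%nat -> Rv j <= P.
Proof. apply maxd_ge. Qed.

Lemma gauge_ge0 y : 0 <= gauge d Rv y.
Proof. apply rpow_ge0. Qed.

Lemma gauge_ext y z : (forall j, (j < d)%nat -> y j = z j) -> gauge d Rv y = gauge d Rv z.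
Proof. intros H. unfold gauge, ballsum. f_equal. apply sumd_ext. intros j Hj. rewrite H; auto. Qed.

Lemma gauge_le_iff y c : 0 <= c -> (gauge d Rv y <= c <-> ballsum d Rv y <= rpow c (2 * P)).
Proof.
  intros Hc. pose proof pR_ge_half. unfold gauge.
  rewrite rpow_le_iff, Rinv_inv; try tauto.
  - apply Rinv_0_lt_compat; unfold P in *; lra.
  - apply sumd_ge0; intros; apply rpow_ge0.
Qed.

Lemma gauge_as_lp_norm y :
  gauge d Rv y = lp_norm d (2 * P) (fun j => rpow (Rabs (y j)) (2 * Rv j / (2 * P))).
Proof.
  pose proof pR_ge_half. unfold gauge, lp_norm, ballsum. f_equal. apply sumd_ext. intros j Hj.
  rewrite rpow_rpow by apply Rabs_pos. f_equal. field. unfold P in *; lra.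
Qed.

Lemma gauge_triangle y z : gauge d Rv (fun j => y j + z j) <= gauge d Rv y + gauge d Rv z.
Proof.
  pose proof pR_ge_half as HP. rewrite !gauge_as_lp_norm.
  set (al := fun j => 2 * Rv j / (2 * P)).
  assert (Hal : forall j, (j < d)%nat -> 0 < al j <= 1).
  { intros j Hj. pose proof (HR j Hj). pose proof (Rv_le_pR j Hj). unfold al.
    split; [apply Rdiv_lt_0_compat; lra|].
    apply Rmult_le_reg_r with (2 * P); [lra|]. unfold Rdiv. rewrite Rmult_assoc, Rinv_l; lra. }
  eapply Rle_trans; [| apply minkowski; try lra; intros; apply rpow_ge0].
  unfold lp_norm. apply rpow_le; [apply Rinv_0_lt_compat; lra|].
  split; [apply sumd_ge0; intros; apply rpow_ge0|].
  apply sumd_le. intros j Hj. apply rpow_le; [lra|]. split; [apply rpow_ge0|].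
  eapply Rle_trans; [| apply rpow_subadditive; [apply Rabs_pos | apply Rabs_pos | apply Hal; auto]].
  apply rpow_le; [apply Hal; auto|]. split; [apply Rabs_pos | apply Rabs_triang].
Qed.

Lemma gauge_half_cube e : (forall j, (j < d)%nat -> Rabs (e j) <= / 2) -> gauge d Rv e <= bR d Rv.
Proof.
  intros He. pose proof pR_ge_half. apply rpow_le; [apply Rinv_0_lt_compat; unfold P in *; lra|].
  split; [apply sumd_ge0; intros; apply rpow_ge0|].
  apply sumd_le. intros j Hj. pose proof (HR j Hj).
  apply rpow_le; [lra|]. split; [apply Rabs_pos | auto].
Qed.

Lemma gauge_near y k : (forall j, (j < d)%nat -> Rabs (y j - k j) <= / 2) ->
  gauge d Rv y <= gauge d Rv k + bR d Rv.
Proof.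
  intros H. rewrite (gauge_ext y (fun j => k j + (y j - k j))) by (intros; ring).
  pose proof (gauge_triangle k (fun j => y j - k j)). pose proof (gauge_half_cube _ H). lra.
Qed.

Lemma gauge_dilate x mu : 0 < mu ->
  gauge d Rv (fun j => rpow mu (P / Rv j) * x j) = mu * gauge d Rv x.
Proof.
  intros Hmu. pose proof pR_ge_half as HP. unfold gauge. fold P.
  assert (Hsum : ballsum d Rv (fun j => rpow mu (P / Rv j) * x j) = rpow mu (2 * P) * ballsum d Rv x).
  { unfold ballsum. rewrite <- sumd_scal. apply sumd_ext. intros j Hj. pose proof (HR j Hj).
    rewrite Rabs_mult, (Rabs_right (rpow _ _)) by (apply Rle_ge, rpow_ge0).
    rewrite rpow_mul, rpow_rpow by (try apply rpow_ge0; try apply Rabs_pos; lra).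
    f_equal. f_equal. field. lra. }
  rewrite Hsum, rpow_mul, rpow_rpow by (try apply rpow_ge0; try apply sumd_ge0; intros; try apply rpow_ge0; lra).
  replace (2 * P * / (2 * P)) with 1 by (field; lra). rewrite rpow_1; lra.
Qed.

End Gauge.

(** * Heine-Borel for boxes *)

Lemma list_bound {T} (l : list T) (Q : T -> nat -> Prop) :
  (forall c N N', Q c N -> (N <= N')%nat -> Q c N') -> (forall c, In c l -> exists N, Q c N) ->
  exists M, forall c, In c l -> Q c M.
Proof.
  intros Hm. induction l as [|c0 l IH]; intros H; [exists 0%nat; intros c []|].
  destruct IH as [M HM]; [intros; apply H; simpl; auto|].
  destruct (H c0) as [N0 HN0]; [simpl; auto|].
  exists (Nat.max M N0). intros c [<-|Hc]; [apply (Hm _ N0) | apply (Hm _ M)]; auto; lia.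
Qed.

Lemma interval_uniform (a b : R) (Q : R -> nat -> Prop) :
  (forall t N N', Q t N -> (N <= N')%nat -> Q t N') ->
  (forall s, a <= s <= b -> exists dl N, 0 < dl /\
     forall t, a <= t <= b -> Rabs (t - s) < dl -> Q t N) ->
  exists N, forall t, a <= t <= b -> Q t N.
Proof.
  intros Hmono Hloc.
  assert (Ch : forall s, exists p : R * nat, a <= s <= b ->
     0 < fst p /\ forall t, a <= t <= b -> Rabs (t - s) < fst p -> Q t (snd p)).
  { intros s. destruct (classic (a <= s <= b)) as [Hs|Hs]; [|exists (1, 0%nat); tauto].
    destruct (Hloc s Hs) as [dl [N HN]]. exists (dl, N); auto. }
  set (ch := fun s => proj1_sig (constructive_indefinite_description _ (Ch s))).
  assert (Hch : forall s, a <= s <= b -> 0 < fst (ch s) /\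
     forall t, a <= t <= b -> Rabs (t - s) < fst (ch s) -> Q t (snd (ch s))).
  { intros s. unfold ch. destruct (constructive_indefinite_description _ (Ch s)); auto. }
  set (F := fun s t => (a <= s <= b) /\ Rabs (t - s) < fst (ch s)).
  assert (HF : forall s, (exists t, F s t) -> a <= s <= b) by (intros s [t [Hs _]]; auto).
  destruct (compact_P3 a b (mkfamily (fun s => a <= s <= b) F HF)) as [D [Hcov [l Hl]]].
  { split.
    - intros t Ht. exists t. split; auto. rewrite Rminus_diag, Rabs_R0. apply Hch; auto.
    - intros s t [Hs Hts]. simpl in Hts.
      assert (Hr : 0 < fst (ch s) - Rabs (t - s)) by lra.
      exists (mkposreal _ Hr). intros t' Ht'. unfold disc in Ht'. simpl in Ht' |- *. split; auto.
      pose proof (Rabs_triang (t' - t) (t - s)). replace (t' - t + (t - s)) with (t' - s) in * by ring.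
      lra. }
  destruct (list_bound l (fun s N => (snd (ch s) <= N)%nat)) as [M HM];
    [intros; lia | intros s _; exists (snd (ch s)); auto |].
  exists M. intros t Ht. destruct (Hcov t Ht) as [s [[Hs Hts] HDs]].
  assert (Hsl : In s l) by (apply Hl; split; auto).
  apply (Hmono _ (snd (ch s))); [apply Hch; auto | apply HM; auto].
Qed.

Lemma open_intervals_common_radius (c e : nat -> R) s N :
  exists dl, 0 < dl /\ forall n, (n < N)%nat -> c n < s < e n ->
    forall t, Rabs (t - s) < dl -> c n < t < e n.
Proof.
  induction N as [|N [dl [Hdl H]]]; [exists 1; split; [lra | intros; lia]|].
  destruct (classic (c N < s < e N)) as [HN|HN].
  - set (dl' := Rmin dl (Rmin (s - c N) (e N - s))).
    assert (dl' <= dl /\ dl' <= s - c N /\ dl' <= e N - s)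
      by (unfold dl'; repeat split; try apply Rmin_l;
          eapply Rle_trans; try apply Rmin_r; try apply Rmin_l; apply Rmin_r).
    exists dl'. split; [repeat apply Rmin_pos; lra|].
    intros n Hn Hs t Ht. destruct (Nat.eq_dec n N) as [->|].
    + apply Rabs_def2 in Ht. lra.
    + apply (H n); auto; [lia | lra].
  - exists dl. split; auto. intros n Hn. destruct (Nat.eq_dec n N) as [->|]; [tauto|].
    apply H; lia.
Qed.

Definition in_obox (d : nat) (c e x : nat -> R) : Prop :=
  forall j, (j < d)%nat -> c j < x j < e j.

Lemma box_compact d (a b : nat -> R) (c e : nat -> nat -> R) (act : nat -> Prop) :
  (forall x, in_box d a b x -> exists n, act n /\ in_obox d (c n) (e n) x) ->
  exists N, forall x, in_box d a b x -> exists n, (n < N)%nat /\ act n /\ in_obox d (c n) (e n) x.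
Proof.
  revert act. induction d as [|d IHd]; intros act H.
  { destruct (H (fun _ => 0)) as [n0 [Ha _]]; [intros j Hj; lia|].
    exists (S n0). intros x _. exists n0. split; [lia | split; auto]. intros j Hj; lia. }
  set (Q := fun t N => forall x, in_box (S d) a b x -> x d = t ->
       exists n, (n < N)%nat /\ act n /\ in_obox (S d) (c n) (e n) x).
  destruct (interval_uniform (a d) (b d) Q) as [N HN].
  - intros t N N' HQ HNN' x Hx Ht. destruct (HQ x Hx Ht) as [n [Hn Hr]]. exists n. split; auto; lia.
  - (* the slice [x d = s] is a box of dimension d, covered by the boxes that meet it *)
    intros s Hs.
    set (upd := fun (x : nat -> R) i => if Nat.eq_dec i d then s else x i).
    destruct (IHd (fun n => act n /\ c n d < s < e n d)) as [N HN].
    { intros x Hx. destruct (H (upd x)) as [n [Hn1 Hn2]].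
      { intros j Hj. unfold upd. destruct (Nat.eq_dec j d); [subst; lra | apply Hx; lia]. }
      exists n. split; [split; auto|].
      - specialize (Hn2 d ltac:(lia)). unfold upd in Hn2. destruct (Nat.eq_dec d d); tauto.
      - intros j Hj. specialize (Hn2 j ltac:(lia)). unfold upd in Hn2.
        destruct (Nat.eq_dec j d); [lia | auto]. }
    destruct (open_intervals_common_radius (fun n => c n d) (fun n => e n d) s N) as [dl [Hdl Hrad]].
    exists dl, N. split; auto. intros t Ht Hts x Hx Hxt.
    destruct (HN x) as [n [Hn [[Ha Hs2] Hin]]]; [intros j Hj; apply Hx; lia|].
    exists n. split; [auto | split; auto]. intros j Hj.
    destruct (Nat.eq_dec j d) as [->|]; [rewrite Hxt; apply (Hrad n); auto | apply Hin; lia].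
  - exists N. intros x Hx. apply (HN (x d)); auto.
Qed.

(** * Counting lattice points in boxes *)

Definition sumL {A} (l : list A) (f : A -> R) : R := fold_right (fun x acc => f x + acc) 0 l.

Definition indic (P : Prop) : R := if excluded_middle_informative P then 1 else 0.

Lemma indic_1 (P : Prop) : P -> indic P = 1.
Proof. unfold indic; destruct (excluded_middle_informative P); tauto. Qed.

Lemma indic_0 (P : Prop) : ~ P -> indic P = 0.
Proof. unfold indic; destruct (excluded_middle_informative P); tauto. Qed.

Lemma indic_ge0 P : 0 <= indic P.
Proof. unfold indic; destruct (excluded_middle_informative P); lra. Qed.

Lemma indic_ext (P Q : Prop) : (P <-> Q) -> indic P = indic Q.
Proof.
  intros. destruct (excluded_middle_informative P); [rewrite !indic_1 | rewrite !indic_0]; tauto.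
Qed.

Section ListSums.

Context {A : Type}.

Lemma sumL_app (l1 l2 : list A) f : sumL (l1 ++ l2) f = sumL l1 f + sumL l2 f.
Proof. induction l1; simpl; [ring|]. rewrite IHl1; ring. Qed.

Lemma sumL_le (l : list A) f g : (forall x, In x l -> f x <= g x) -> sumL l f <= sumL l g.
Proof.
  induction l; simpl; intros H; [lra|].
  assert (f a <= g a) by auto. assert (sumL l f <= sumL l g) by auto. lra.
Qed.

Lemma sumL_ext (l : list A) f g : (forall x, In x l -> f x = g x) -> sumL l f = sumL l g.
Proof. induction l; simpl; intros H; auto. rewrite H, IHl; auto. Qed.

Lemma sumL_ge0 (l : list A) f : (forall x, In x l -> 0 <= f x) -> 0 <= sumL l f.
Proof.
  induction l; simpl; intros H; [lra|].
  assert (0 <= f a) by auto. assert (0 <= sumL l f) by auto. lra.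
Qed.

Lemma sumL_plus (l : list A) f g : sumL l (fun x => f x + g x) = sumL l f + sumL l g.
Proof. induction l; simpl; [ring|]. rewrite IHl; ring. Qed.

Lemma sumL_scal (l : list A) c f : sumL l (fun x => c * f x) = c * sumL l f.
Proof. induction l; simpl; [ring|]. rewrite IHl; ring. Qed.

Lemma sumL_const (l : list A) c : sumL l (fun _ => c) = INR (length l) * c.
Proof. induction l; simpl length; simpl sumL; [simpl; ring|]. rewrite IHl, S_INR; ring. Qed.

Lemma sumL_map {B} (l : list B) (g : B -> A) f : sumL (map g l) f = sumL l (fun x => f (g x)).
Proof. induction l; simpl; auto. rewrite IHl; auto. Qed.

Lemma sumL_flat_map {B} (l : list B) (g : B -> list A) f :
  sumL (flat_map g l) f = sumL l (fun x => sumL (g x) f).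
Proof. induction l; simpl; auto. rewrite sumL_app, IHl; auto. Qed.

Lemma sumL_term_le (l : list A) f x : (forall y, In y l -> 0 <= f y) -> In x l -> f x <= sumL l f.
Proof.
  induction l; simpl; intros H Hx; [tauto|].
  assert (0 <= sumL l f) by (apply sumL_ge0; auto). assert (0 <= f a) by auto.
  destruct Hx as [->|Hx]; [lra|]. assert (f x <= sumL l f) by auto. lra.
Qed.

Lemma sumL_indic_le1 (l : list A) (P : A -> Prop) : NoDup l ->
  (forall c c', In c l -> In c' l -> P c -> P c' -> c = c') -> sumL l (fun c => indic (P c)) <= 1.
Proof.
  induction l as [|c0 l IH]; simpl; intros Hn Hu; [lra|]. inversion Hn; subst.
  destruct (excluded_middle_informative (P c0)).
  - rewrite indic_1 by auto. rewrite (sumL_ext l _ (fun _ => 0)), sumL_const; [lra|].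
    intros x Hx. apply indic_0. intro Px. assert (x = c0) by (apply Hu; auto). subst; tauto.
  - rewrite indic_0 by auto. assert (sumL l (fun c => indic (P c)) <= 1) by (apply IH; auto). lra.
Qed.

End ListSums.

Lemma sumL_swap {A B} (l1 : list A) (l2 : list B) g :
  sumL l1 (fun x => sumL l2 (g x)) = sumL l2 (fun y => sumL l1 (fun x => g x y)).
Proof.
  induction l1; simpl; [induction l2; simpl; auto; rewrite <- IHl2; ring|].
  rewrite IHl1, <- sumL_plus. auto.
Qed.

Lemma prodd_ext d f g : (forall j, (j < d)%nat -> f j = g j) -> prodd d f = prodd d g.
Proof. induction d; simpl; intros H; auto. rewrite IHd, (H d); auto; intros; apply H; lia. Qed.

Lemma prodd_ge0 d f : (forall j, (j < d)%nat -> 0 <= f j) -> 0 <= prodd d f.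
Proof.
  induction d; simpl; intros H; [lra|].
  apply Rmult_le_pos; [apply IHd; intros|]; apply H; lia.
Qed.

Lemma prodd_le d f g : (forall j, (j < d)%nat -> 0 <= f j <= g j) -> prodd d f <= prodd d g.
Proof.
  induction d; simpl; intros H; [lra|].
  apply Rmult_le_compat; try apply H; try lia.
  - apply prodd_ge0; intros; apply H; lia.
  - apply IHd; intros; apply H; lia.
Qed.

Lemma prodd_scal d c f : prodd d (fun j => c * f j) = c ^ d * prodd d f.
Proof. induction d; simpl; [ring|]. rewrite IHd; ring. Qed.

Lemma prodd_le_pow d f A : (forall j, (j < d)%nat -> 0 <= f j <= A) -> prodd d f <= A ^ d.
Proof.
  intros H. replace (A ^ d) with (prodd d (fun _ => A)) by (clear; induction d; simpl; auto;
    rewrite IHd; ring).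
  apply prodd_le; auto.
Qed.

Lemma indic_forall d (P : nat -> Prop) :
  indic (forall j, (j < d)%nat -> P j) = prodd d (fun j => indic (P j)).
Proof.
  induction d; simpl; [apply indic_1; intros; lia|].
  rewrite <- IHd. destruct (excluded_middle_informative (P d)).
  - rewrite (indic_1 (P d)), Rmult_1_r by auto. apply indic_ext.
    split; intros H j Hj; auto. destruct (Nat.eq_dec j d); [subst; auto | apply H; lia].
  - rewrite (indic_0 (P d)), Rmult_0_r by auto. apply indic_0. intro H; apply n, H; lia.
Qed.

Fixpoint tuples (d : nat) (r : list Z) : list (list Z) :=
  match d with
  | O => nil :: nil
  | S n => flat_map (fun l => map (fun t => l ++ t :: nil) r) (tuples n r)
  end.

Lemma tuples_length d r k : In k (tuples d r) -> length k = d.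
Proof.
  revert k; induction d; simpl; intros k H; [destruct H as [<-|[]]; auto|].
  apply in_flat_map in H. destruct H as [l [Hl Hk]].
  apply in_map_iff in Hk. destruct Hk as [t [<- _]].
  rewrite length_app, (IHd l Hl). simpl. lia.
Qed.

Lemma in_tuples d r k : In k (tuples d r) <-> length k = d /\ forall j, (j < d)%nat -> In (nth j k 0%Z) r.
Proof.
  revert k; induction d; intros k; simpl.
  { split; [intros [<-|[]]; split; auto; intros; lia|].
    intros [H _]; left; destruct k; simpl in *; auto; lia. }
  rewrite in_flat_map. split.
  - intros [l [Hl Hk]]. apply in_map_iff in Hk. destruct Hk as [t [<- Ht]].
    apply IHd in Hl. destruct Hl as [Hl1 Hl2]. rewrite length_app; simpl. split; [lia|].
    intros j Hj. destruct (Nat.eq_dec j d) as [->|].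
    + rewrite app_nth2, Hl1, Nat.sub_diag by lia; auto.
    + rewrite app_nth1 by lia. apply Hl2; lia.
  - intros [H1 H2]. destruct (exists_last (l := k)) as [l [t ->]]; [intro E; subst; simpl in H1; lia|].
    rewrite length_app in H1; simpl in H1.
    exists l. split.
    + apply IHd. split; [lia|]. intros j Hj. specialize (H2 j ltac:(lia)).
      rewrite app_nth1 in H2 by lia. auto.
    + apply in_map_iff. exists t. split; auto. specialize (H2 d ltac:(lia)).
      rewrite app_nth2 in H2 by lia. replace (d - length l)%nat with 0%nat in H2 by lia. auto.
Qed.

Lemma NoDup_map_inj {A B} (f : A -> B) l : (forall x y, f x = f y -> x = y) -> NoDup l -> NoDup (map f l).
Proof.
  intros Hf Hn; induction Hn; simpl; constructor; auto.
  intros H'. apply in_map_iff in H'. destruct H' as [y [Hy Hy']]. apply Hf in Hy. subst; tauto.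
Qed.

Lemma tuples_NoDup d r : NoDup r -> NoDup (tuples d r).
Proof.
  intros Hr. induction d as [|d IHd]; simpl; [constructor; [simpl; tauto | constructor]|].
  induction IHd as [|l ls Hl Hls IH]; simpl; [constructor|].
  apply NoDup_app; auto.
  - apply NoDup_map_inj; auto. intros x y E. apply app_inv_head in E. congruence.
  - intros k Hk Hk'. apply in_map_iff in Hk. destruct Hk as [t [<- _]].
    apply in_flat_map in Hk'. destruct Hk' as [l' [Hl' Hk']].
    apply in_map_iff in Hk'. destruct Hk' as [t' [E _]].
    apply app_inj_tail in E. destruct E; subst; tauto.
Qed.

Lemma sumL_tuples_prodd d r (f : nat -> Z -> R) :
  sumL (tuples d r) (fun k => prodd d (fun j => f j (nth j k 0%Z))) = prodd d (fun j => sumL r (f j)).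
Proof.
  induction d; simpl; [ring|].
  rewrite sumL_flat_map, <- IHd, (Rmult_comm _ (sumL r (f d))), <- sumL_scal.
  apply sumL_ext. intros l Hl. pose proof (tuples_length d r l Hl) as Hlen.
  rewrite sumL_map, (sumL_ext r _ (fun t => prodd d (fun j => f j (nth j l 0%Z)) * f d t)).
  - rewrite sumL_scal. ring.
  - intros t _. rewrite app_nth2, Hlen, Nat.sub_diag by lia. f_equal.
    apply prodd_ext. intros j Hj. rewrite app_nth1 by lia. auto.
Qed.

Lemma sumL_tuples_indic d r (P : nat -> Z -> Prop) :
  sumL (tuples d r) (fun k => indic (forall j, (j < d)%nat -> P j (nth j k 0%Z))) =
  prodd d (fun j => sumL r (fun t => indic (P j t))).
Proof.
  rewrite <- (sumL_tuples_prodd d r (fun j t => indic (P j t))).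
  apply sumL_ext. intros k _. apply indic_forall.
Qed.

Definition zrange (M : nat) : list Z :=
  map (fun i => (Z.of_nat i - Z.of_nat M)%Z) (seq 0 (2 * M + 1)).

Lemma in_zrange M t : In t (zrange M) <-> (- Z.of_nat M <= t <= Z.of_nat M)%Z.
Proof.
  unfold zrange. rewrite in_map_iff. split.
  - intros [i [<- Hi]]. apply in_seq in Hi. lia.
  - intros H. exists (Z.to_nat (t + Z.of_nat M)). split; [lia | apply in_seq; lia].
Qed.

Lemma zrange_NoDup M : NoDup (zrange M).
Proof. apply NoDup_map_inj; [intros; lia | apply seq_NoDup]. Qed.

Lemma sumL_zrange M (f : R -> R) :
  sumL (zrange M) (fun t => f (IZR t)) = sumL (seq 0 (2 * M + 1)) (fun i => f (- INR M + INR i)).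
Proof.
  unfold zrange. rewrite sumL_map. apply sumL_ext. intros i _. f_equal.
  rewrite minus_IZR, <- !INR_IZR_INZ. ring.
Qed.

Lemma count_seq_le n lo A B :
  sumL (seq 0 n) (fun i => indic (A <= lo + INR i <= B)) <= Rmax 0 (Rmin B (lo + INR n - 1) - A + 1).
Proof.
  induction n; [apply Rmax_l|].
  rewrite seq_S, sumL_app, S_INR. simpl sumL. rewrite Rplus_0_r.
  destruct (excluded_middle_informative (A <= lo + INR n <= B)) as [H|H];
    [rewrite indic_1 | rewrite indic_0]; auto;
    unfold Rmax, Rmin in *; repeat destruct Rle_dec; lra.
Qed.

Lemma count_seq_ge n lo A B :
  Rmin B (lo + INR n) - Rmax A lo - 1 <= sumL (seq 0 n) (fun i => indic (A <= lo + INR i < B)).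
Proof.
  induction n; [simpl; unfold Rmax, Rmin; repeat destruct Rle_dec; lra|].
  assert (Hge0 : 0 <= sumL (seq 0 n) (fun i => indic (A <= lo + INR i < B)))
    by (apply sumL_ge0; intros; apply indic_ge0).
  rewrite seq_S, sumL_app, S_INR. simpl sumL. rewrite Rplus_0_r.
  destruct (excluded_middle_informative (A <= lo + INR n < B)) as [H|H];
    [rewrite indic_1 | rewrite indic_0]; auto;
    unfold Rmax, Rmin in *; repeat destruct Rle_dec; lra.
Qed.

Lemma div_between_iff K u a b : 0 < K ->
  (a <= u / K < b <-> K * a <= u < K * b) /\ (a <= u / K <= b <-> K * a <= u <= K * b).
Proof.
  intros HK. assert (Hu : u = K * (u / K)) by (field; lra). set (v := u / K) in *.
  rewrite Hu. split; split; intros [H1 H2]; split; nra.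
Qed.

Lemma count_grid_ge M K a b : 0 < K -> - INR M <= K * a -> K * b <= INR M + 1 ->
  K * (b - a) - 1 <= sumL (zrange M) (fun t => indic (a <= IZR t / K < b)).
Proof.
  intros HK H1 H2. rewrite (sumL_zrange M (fun u => indic (a <= u / K < b))).
  rewrite (sumL_ext _ _ (fun i => indic (K * a <= - INR M + INR i < K * b)))
    by (intros i _; apply indic_ext, div_between_iff; auto).
  eapply Rle_trans; [|apply count_seq_ge]. rewrite plus_INR, mult_INR. simpl INR.
  unfold Rmax, Rmin. repeat destruct Rle_dec; lra.
Qed.

Lemma count_grid_le M K a b : 0 < K -> a <= b ->
  sumL (zrange M) (fun t => indic (a <= IZR t / K <= b)) <= K * (b - a) + 1.
Proof.
  intros HK Hab. rewrite (sumL_zrange M (fun u => indic (a <= u / K <= b))).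
  rewrite (sumL_ext _ _ (fun i => indic (K * a <= - INR M + INR i <= K * b)))
    by (intros i _; apply indic_ext, div_between_iff; auto).
  eapply Rle_trans; [apply count_seq_le|].
  assert (K * a <= K * b) by (apply Rmult_le_compat_l; lra).
  unfold Rmax, Rmin. repeat destruct Rle_dec; lra.
Qed.

(** * Finite additivity of box volume *)

Definition kvec (k : list Z) : nat -> R := fun j => IZR (nth j k 0%Z).

Definition cell_lo (s : nat -> R) (k : list Z) : nat -> R := fun j => (kvec k j - / 2) * s j.
Definition cell_hi (s : nat -> R) (k : list Z) : nat -> R := fun j => (kvec k j + / 2) * s j.

Definition in_hcell (d : nat) (s : nat -> R) (k : list Z) (x : nat -> R) : Prop :=
  forall j, (j < d)%nat -> cell_lo s k j <= x j < cell_hi s k j.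

Lemma in_hcell_unique d s k k' x : (forall j, (j < d)%nat -> 0 < s j) ->
  length k = d -> length k' = d -> in_hcell d s k x -> in_hcell d s k' x -> k = k'.
Proof.
  intros Hs Hk Hk' H1 H2. apply (nth_ext k k' 0%Z 0%Z); [congruence|].
  intros j Hj. rewrite Hk in Hj.
  specialize (H1 j Hj). specialize (H2 j Hj). specialize (Hs j Hj).
  unfold cell_lo, cell_hi, kvec in *.
  assert (IZR (nth j k 0%Z) - IZR (nth j k' 0%Z) < 1) by (apply (Rmult_lt_reg_r (s j)); nra).
  assert (IZR (nth j k' 0%Z) - IZR (nth j k 0%Z) < 1) by (apply (Rmult_lt_reg_r (s j)); nra).
  rewrite <- minus_IZR in *. apply lt_IZR in H. apply lt_IZR in H0. lia.
Qed.

Lemma exists_nat_bound {T} (l : list T) d (F : T -> nat -> R) :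
  exists M : nat, forall c j, In c l -> (j < d)%nat -> F c j <= INR M.
Proof.
  set (F' := fun c j => Rabs (F c j)).
  destruct (INR_unbounded (sumL l (fun c => sumd d (F' c)))) as [M HM].
  exists M. intros c j Hc Hj. pose proof (Rle_abs (F c j)).
  assert (F' c j <= sumL l (fun c => sumd d (F' c))); [|unfold F' in *; lra].
  eapply Rle_trans; [apply (sumd_term_le d (F' c)); auto; intros; apply Rabs_pos|].
  apply (sumL_term_le l (fun c => sumd d (F' c))); auto.
  intros; apply sumd_ge0; intros; apply Rabs_pos.
Qed.

Definition grid (K : nat) (k : list Z) : nat -> R := fun j => IZR (nth j k 0%Z) / INR K.

Section GridCount.

Variables (d K M : nat) (s : nat -> R).
Hypothesis HK : (0 < K)%nat.

Let G := tuples d (zrange M).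

Lemma grid_count_hcell_ge c : (forall j, (j < d)%nat -> 1 <= INR K * s j) ->
  (forall j, (j < d)%nat -> INR K * ((Rabs (kvec c j) + 1) * s j) <= INR M) ->
  prodd d (fun j => INR K * s j - 1) <= sumL G (fun k => indic (in_hcell d s c (grid K k))).
Proof.
  intros HKs HM. assert (HKp : 0 < INR K) by (apply lt_0_INR; auto).
  unfold G, in_hcell, grid.
  rewrite (sumL_tuples_indic d (zrange M) (fun j t => cell_lo s c j <= IZR t / INR K < cell_hi s c j)).
  apply prodd_le. intros j Hj. specialize (HKs j Hj). specialize (HM j Hj). split; [lra|].
  assert (Hs : 0 < s j) by (destruct (Rle_lt_dec (s j) 0); [nra | auto]).
  pose proof (Rle_abs (kvec c j)). pose proof (Rle_abs (- kvec c j)). rewrite Rabs_Ropp in *.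
  unfold cell_lo, cell_hi in *.
  eapply Rle_trans; [| apply count_grid_ge]; auto; [right; field | nra | nra].
Qed.

Lemma grid_count_box_le a b : (forall j, (j < d)%nat -> a j <= b j) ->
  sumL G (fun k => indic (in_box d a b (grid K k))) <= prodd d (fun j => INR K * (b j - a j) + 1).
Proof.
  intros Hab. assert (HKp : 0 < INR K) by (apply lt_0_INR; auto).
  unfold G, in_box, grid.
  rewrite (sumL_tuples_indic d (zrange M) (fun j t => a j <= IZR t / INR K <= b j)).
  apply prodd_le. intros j Hj. split; [apply sumL_ge0; intros; apply indic_ge0|].
  apply count_grid_le; auto.
Qed.

End GridCount.

Lemma prodd_add_le d l A h : (forall j, (j < d)%nat -> 0 <= l j <= A) -> 0 <= h <= 1 ->
  prodd d (fun j => l j + h) <= prodd d l + h * INR d * (A + 1) ^ d.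
Proof.
  intros Hl Hh. induction d; [simpl; lra|].
  assert (HA : 0 <= A) by (specialize (Hl d ltac:(lia)); lra).
  assert (IH : prodd d (fun j => l j + h) <= prodd d l + h * INR d * (A + 1) ^ d)
    by (apply IHd; intros; apply Hl; lia).
  assert (P0 : 0 <= prodd d l) by (apply prodd_ge0; intros; apply Hl; lia).
  assert (P1 : prodd d l <= (A + 1) ^ d)
    by (apply prodd_le_pow; intros j Hj; specialize (Hl j ltac:(lia)); lra).
  assert (P2 : 0 <= prodd d (fun j => l j + h))
    by (apply prodd_ge0; intros j Hj; specialize (Hl j ltac:(lia)); lra).
  simpl prodd. rewrite S_INR. simpl pow. specialize (Hl d ltac:(lia)).
  set (P := prodd d l) in *. set (P' := prodd d (fun j => l j + h)) in *. set (E := (A + 1) ^ d) in *.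
  pose proof (pos_INR d).
  assert (P' * (l d + h) <= (P + h * INR d * E) * (l d + h)) by (apply Rmult_le_compat_r; lra).
  assert (h * INR d * E * (l d + h) <= h * INR d * E * (A + 1))
    by (apply Rmult_le_compat_l; [repeat apply Rmult_le_pos|]; lra).
  assert (P * h <= E * h) by (apply Rmult_le_compat_r; lra).
  assert (0 <= E * h * A) by (repeat apply Rmult_le_pos; lra).
  nra.
Qed.

Lemma prodd_sub_ge d s A h : (forall j, (j < d)%nat -> h <= s j <= A) -> 0 <= h ->
  prodd d s - h * INR d * (A + 1) ^ d <= prodd d (fun j => s j - h).
Proof.
  intros Hl Hh. induction d; [simpl; lra|].
  assert (HA : 0 <= A) by (specialize (Hl d ltac:(lia)); lra).
  assert (IH : prodd d s - h * INR d * (A + 1) ^ d <= prodd d (fun j => s j - h))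
    by (apply IHd; intros; apply Hl; lia).
  assert (P0 : 0 <= prodd d s) by (apply prodd_ge0; intros j Hj; specialize (Hl j ltac:(lia)); lra).
  assert (P1 : prodd d s <= (A + 1) ^ d)
    by (apply prodd_le_pow; intros j Hj; specialize (Hl j ltac:(lia)); lra).
  simpl prodd. rewrite S_INR. simpl pow. specialize (Hl d ltac:(lia)).
  set (P := prodd d s) in *. set (P' := prodd d (fun j => s j - h)) in *. set (E := (A + 1) ^ d) in *.
  pose proof (pos_INR d).
  assert ((P - h * INR d * E) * (s d - h) <= P' * (s d - h)) by (apply Rmult_le_compat_r; lra).
  assert (h * INR d * E * (s d - h) <= h * INR d * E * (A + 1))
    by (apply Rmult_le_compat_l; [repeat apply Rmult_le_pos|]; lra).
  assert (P * h <= E * h) by (apply Rmult_le_compat_r; lra).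
  assert (0 <= E * h * A) by (repeat apply Rmult_le_pos; lra).
  nra.
Qed.

Lemma le0_of_le_div_INR X Y K0 : (forall K, (K0 <= K)%nat -> (1 <= K)%nat -> X <= Y / INR K) -> X <= 0.
Proof.
  intros H. destruct (Rle_lt_dec X 0) as [|HX]; auto. exfalso.
  destruct (INR_unbounded (Rabs Y / X)) as [n Hn].
  set (K := (K0 + n + 1)%nat). specialize (H K ltac:(unfold K; lia) ltac:(unfold K; lia)).
  assert (HK : INR n < INR K) by (apply lt_INR; unfold K; lia).
  assert (HK0 : 0 < INR K) by (pose proof (pos_INR n); lra).
  assert (INR K * X <= Y).
  { apply (Rmult_le_compat_l (INR K)) in H; [|lra].
    replace (INR K * (Y / INR K)) with Y in H by (field; lra). auto. }
  assert (Rabs Y < INR K * X).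
  { assert (Rabs Y / X < INR K) by lra. apply (Rmult_lt_compat_r X) in H1; auto.
    replace (Rabs Y / X * X) with (Rabs Y) in H1 by (field; lra). lra. }
  pose proof (Rle_abs Y). lra.
Qed.

Section FiniteAdditivity.

Variables (d : nat) (s : nat -> R) (L : list (list Z)) (N : nat) (Al Bl : nat -> nat -> R).
Hypothesis Hs : forall j, (j < d)%nat -> 0 < s j.
Hypothesis HL : NoDup L.
Hypothesis HLlen : forall c, In c L -> length c = d.
Hypothesis HAB : forall n j, (j < d)%nat -> Al n j <= Bl n j.
Hypothesis Hcov : forall c x, In c L -> in_hcell d s c x ->
  exists n, (n < N)%nat /\ in_box d (Al n) (Bl n) x.

(* Count the points of the grid [(1/K) Z^d] in the cells and in the boxes. *)
Lemma hcells_count_le_boxes_count K : (0 < K)%nat -> (forall j, (j < d)%nat -> 1 <= INR K * s j) ->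
  INR (length L) * prodd d (fun j => INR K * s j - 1) <=
  sumL (seq 0 N) (fun n => prodd d (fun j => INR K * (Bl n j - Al n j) + 1)).
Proof.
  intros HK HKs.
  destruct (exists_nat_bound L d (fun c j => INR K * ((Rabs (kvec c j) + 1) * s j))) as [M HM].
  set (G := tuples d (zrange M)).
  assert (Hpoint : forall k, sumL L (fun c => indic (in_hcell d s c (grid K k))) <=
                             sumL (seq 0 N) (fun n => indic (in_box d (Al n) (Bl n) (grid K k)))).
  { intros k. destruct (classic (exists c, In c L /\ in_hcell d s c (grid K k))) as [[c [Hc Hh]]|Hno].
    - destruct (Hcov c _ Hc Hh) as [n [Hn Hb]].
      eapply Rle_trans.
      { apply sumL_indic_le1; auto. intros; apply (in_hcell_unique d s _ _ (grid K k)); auto. }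
      rewrite <- (indic_1 _ Hb).
      apply (sumL_term_le _ (fun n => indic (in_box d (Al n) (Bl n) (grid K k))) n);
        [intros; apply indic_ge0 | apply in_seq; lia].
    - rewrite (sumL_ext L _ (fun _ => 0)), sumL_const, Rmult_0_r
        by (intros c Hc; apply indic_0; intro; apply Hno; eauto).
      apply sumL_ge0; intros; apply indic_ge0. }
  eapply Rle_trans; [| eapply Rle_trans; [apply (sumL_le G _ _ (fun k _ => Hpoint k))|]];
    rewrite sumL_swap.
  - rewrite <- sumL_const. apply sumL_le. intros c Hc.
    apply grid_count_hcell_ge; auto.
  - apply sumL_le. intros n _. apply grid_count_box_le; auto.
Qed.

Lemma hcells_vol_le_boxes_vol_approx K : (0 < K)%nat -> (forall j, (j < d)%nat -> 1 <= INR K * s j) ->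
  INR (length L) * prodd d (fun j => s j - / INR K) <=
  sumL (seq 0 N) (fun n => prodd d (fun j => Bl n j - Al n j + / INR K)).
Proof.
  intros HK HKs. assert (HKp : 0 < INR K) by (apply lt_0_INR; auto).
  pose proof (hcells_count_le_boxes_count K HK HKs) as Hc.
  rewrite (prodd_ext d _ (fun j => INR K * (s j - / INR K))), prodd_scal in Hc
    by (intros; field; lra).
  rewrite (sumL_ext _ _ (fun n => INR K ^ d * prodd d (fun j => Bl n j - Al n j + / INR K))),
    sumL_scal in Hc.
  - assert (0 < INR K ^ d) by (apply pow_lt; auto).
    apply (Rmult_le_reg_l (INR K ^ d)); auto. lra.
  - intros n _. rewrite <- prodd_scal. apply prodd_ext. intros; field; lra.
Qed.

Lemma hcells_vol_le_boxes_vol :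
  INR (length L) * prodd d s <= sumL (seq 0 N) (fun n => box_vol d (Al n) (Bl n)).
Proof.
  set (C := INR (length L)). assert (HC : 0 <= C) by apply pos_INR.
  set (Ds := INR d * (sumd d s + 1) ^ d).
  set (Dn := fun n => INR d * (sumd d (fun j => Bl n j - Al n j) + 1) ^ d).
  destruct (INR_unbounded (sumd d (fun j => / s j))) as [K0 HK0].
  assert (C * prodd d s - sumL (seq 0 N) (fun n => box_vol d (Al n) (Bl n)) <= 0); [|lra].
  apply (le0_of_le_div_INR _ (C * Ds + sumL (seq 0 N) Dn) K0). intros K HK HK1.
  assert (HKp : 0 < INR K) by (apply lt_0_INR; lia).
  set (h := / INR K). assert (Hh : 0 < h) by (apply Rinv_0_lt_compat; auto).
  assert (HKs : forall j, (j < d)%nat -> 1 <= INR K * s j).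
  { intros j Hj. pose proof (Hs j Hj).
    assert (/ s j <= INR K).
    { apply le_INR in HK. eapply Rle_trans; [|apply HK]. left. eapply Rle_lt_trans; [|apply HK0].
      apply (sumd_term_le d (fun j => / s j)); auto. intros; left; apply Rinv_0_lt_compat; auto. }
    apply (Rmult_le_compat_r (s j)) in H0; [rewrite Rinv_l in H0|]; lra. }
  pose proof (hcells_vol_le_boxes_vol_approx K ltac:(lia) HKs) as Happrox. fold h in Happrox.
  assert (Hlow : prodd d s - h * Ds <= prodd d (fun j => s j - h)).
  { unfold Ds. rewrite <- Rmult_assoc. apply prodd_sub_ge; [|lra]. intros j Hj. split.
    - pose proof (HKs j Hj). pose proof (Hs j Hj). unfold h.
      apply (Rmult_le_reg_l (INR K)); auto. rewrite Rinv_r; lra.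
    - apply (sumd_term_le d s); auto. intros; left; auto. }
  assert (Hupp : sumL (seq 0 N) (fun n => prodd d (fun j => Bl n j - Al n j + h)) <=
     sumL (seq 0 N) (fun n => box_vol d (Al n) (Bl n)) + h * sumL (seq 0 N) Dn).
  { rewrite <- sumL_scal, <- sumL_plus. apply sumL_le. intros n _. unfold Dn.
    rewrite <- Rmult_assoc. apply prodd_add_le.
    - intros j Hj. pose proof (HAB n j Hj). split; [lra|].
      apply (sumd_term_le d (fun j => Bl n j - Al n j)); auto. intros i Hi. pose proof (HAB n i Hi). lra.
    - split; [lra|]. unfold h. rewrite <- Rinv_1. apply Rinv_le_contravar; [lra|].
      apply (le_INR 1); lia. }
  assert (C * (prodd d s - h * Ds) <= C * prodd d (fun j => s j - h)) by (apply Rmult_le_compat_l; auto).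
  replace ((C * Ds + sumL (seq 0 N) Dn) / INR K) with (h * (C * Ds + sumL (seq 0 N) Dn))
    by (unfold h; field; lra).
  unfold C in *. nra.
Qed.

End FiniteAdditivity.

(** * Covers and outer measure *)

Lemma sum_f_R0_seq f n : sum_f_R0 f n = sumL (seq 0 (S n)) f.
Proof.
  induction n; [simpl; ring|]. simpl sum_f_R0.
  rewrite IHn, (seq_S (S n)), sumL_app. simpl. ring.
Qed.

Lemma sumL_seq_le_infinite_sum f s N : (forall n, 0 <= f n) -> infinite_sum f s ->
  sumL (seq 0 N) f <= s.
Proof.
  intros Hf Hs. destruct N as [|N].
  - pose proof (sum_incr f 0 s Hs Hf). pose proof (Hf 0%nat). simpl in *. lra.
  - rewrite <- sum_f_R0_seq. apply sum_incr; auto.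
Qed.

Lemma sumL_seq_geom N : sumL (seq 0 N) (fun n => / 2 ^ (S n)) = 1 - / 2 ^ N.
Proof.
  induction N; [simpl; field|].
  rewrite seq_S, sumL_app, IHN. simpl. field. apply pow_nonzero; lra.
Qed.

Lemma sumL_seq_nth {T} (l : list T) (dft : T) (f : T -> R) N : f dft = 0 -> (length l <= N)%nat ->
  sumL (seq 0 N) (fun i => f (nth i l dft)) = sumL l f.
Proof.
  revert N; induction l as [|x l IH]; intros N H0 HN.
  - simpl. rewrite (sumL_ext _ _ (fun _ => 0)), sumL_const by (intros [|i] _; auto). ring.
  - destruct N; simpl in HN; [lia|]. simpl.
    rewrite <- seq_shift, sumL_map, IH by (auto; lia). auto.
Qed.

Lemma box_vol_ge0 d a b : (forall j, (j < d)%nat -> a j <= b j) -> 0 <= box_vol d a b.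
Proof. intros H. apply prodd_ge0. intros j Hj. pose proof (H j Hj). lra. Qed.

Lemma cover_sum_ge0 d A s : cover_sum d A s -> 0 <= s.
Proof.
  intros [a [b [Hab [_ Hs]]]].
  apply (sumL_seq_le_infinite_sum (fun n => box_vol d (a n) (b n)) s 0); auto.
  intros n. apply box_vol_ge0; auto.
Qed.

Lemma lebesgue_measure_exists d A : (exists s, cover_sum d A s) -> exists v, lebesgue_measure d A v.
Proof.
  intros [s0 Hs0].
  destruct (completeness (fun w => forall s, cover_sum d A s -> w <= s)) as [v [Hub Hlub]].
  - exists s0. intros w Hw. apply Hw; auto.
  - exists 0. intros s Hs. apply (cover_sum_ge0 d A s Hs).
  - exists v. split.
    + intros s Hs. apply Hlub. intros w Hw. apply Hw; auto.
    + intros w Hw. apply Hub; auto.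
Qed.

(* A finite family of boxes is padded with degenerate boxes of volume zero. *)
Lemma cover_sum_finite d (A : (nat -> R) -> Prop) (BL : list ((nat -> R) * (nat -> R))) :
  (1 <= d)%nat ->
  (forall p, In p BL -> forall j, (j < d)%nat -> fst p j <= snd p j) ->
  (forall x, A x -> exists p, In p BL /\ in_box d (fst p) (snd p) x) ->
  cover_sum d A (sumL BL (fun p => box_vol d (fst p) (snd p))).
Proof.
  intros Hd Hle Hcov. set (z := ((fun _ : nat => 0), (fun _ : nat => 0))).
  exists (fun n => fst (nth n BL z)), (fun n => snd (nth n BL z)). split; [|split].
  - intros n j Hj. destruct (Nat.lt_ge_cases n (length BL)).
    + apply Hle; auto. apply nth_In; auto.
    + rewrite nth_overflow by auto. simpl; lra.
  - intros x Hx. destruct (Hcov x Hx) as [p [Hp Hb]].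
    apply (In_nth BL p z) in Hp. destruct Hp as [n [_ E]]. exists n. rewrite E. auto.
  - intros eps Heps. exists (length BL). intros n Hn. unfold Rdist.
    rewrite sum_f_R0_seq, (sumL_seq_nth BL z (fun p => box_vol d (fst p) (snd p))).
    + rewrite Rminus_diag, Rabs_R0. auto.
    + unfold box_vol. destruct d; [lia|]. simpl. ring.
    + lia.
Qed.

Lemma cover_sum_cells d s (A : (nat -> R) -> Prop) L : (1 <= d)%nat -> (forall j, (j < d)%nat -> 0 < s j) ->
  (forall x, A x -> exists k, In k L /\ in_box d (cell_lo s k) (cell_hi s k) x) ->
  cover_sum d A (INR (length L) * prodd d s).
Proof.
  intros Hd Hs Hcov. set (BL := map (fun k => (cell_lo s k, cell_hi s k)) L).
  replace (INR (length L) * prodd d s) with (sumL BL (fun p => box_vol d (fst p) (snd p))).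
  - apply cover_sum_finite; auto.
    + intros p Hp j Hj. apply in_map_iff in Hp. destruct Hp as [k [<- _]]. simpl.
      unfold cell_lo, cell_hi. pose proof (Hs j Hj). nra.
    + intros x Hx. destruct (Hcov x Hx) as [k [Hk Hb]]. exists (cell_lo s k, cell_hi s k).
      split; auto. apply in_map_iff. eauto.
  - unfold BL. rewrite sumL_map, <- sumL_const. apply sumL_ext. intros k _.
    unfold box_vol. simpl. apply prodd_ext. intros j _. unfold cell_lo, cell_hi. lra.
Qed.

Lemma box_vol_widen_le d a b h : (forall j, (j < d)%nat -> a j <= b j) -> 0 <= h <= 1 ->
  box_vol d (fun j => a j - h / 2) (fun j => b j + h / 2) <=
  box_vol d a b + h * (INR d * (sumd d (fun j => b j - a j) + 1) ^ d).
Proof.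
  intros Hab Hh. unfold box_vol.
  rewrite (prodd_ext d _ (fun j => (b j - a j) + h)) by (intros; field).
  rewrite <- Rmult_assoc. apply prodd_add_le; auto.
  intros j Hj. pose proof (Hab j Hj). split; [lra|].
  apply (sumd_term_le d (fun j => b j - a j)); auto. intros i Hi. pose proof (Hab i Hi). lra.
Qed.

Section CellsInside.

Variables (d : nat) (s : nat -> R) (L : list (list Z)) (A : (nat -> R) -> Prop).
Hypothesis Hs : forall j, (j < d)%nat -> 0 < s j.
Hypothesis HL : NoDup L.
Hypothesis HLlen : forall k, In k L -> length k = d.

Lemma cells_vol_le_open_cover (c e : nat -> nat -> R) : (forall n j, (j < d)%nat -> c n j <= e n j) ->
  (forall k x, In k L -> in_box d (cell_lo s k) (cell_hi s k) x -> exists n, in_obox d (c n) (e n) x) ->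
  exists N, INR (length L) * prodd d s <= sumL (seq 0 N) (fun n => box_vol d (c n) (e n)).
Proof.
  intros Hce Hcov.
  destruct (list_bound L (fun k N => forall x, in_box d (cell_lo s k) (cell_hi s k) x ->
      exists n, (n < N)%nat /\ in_obox d (c n) (e n) x)) as [N HN].
  - intros k N N' HQ HNN' x Hx. destruct (HQ x Hx) as [n [Hn Hr]]. exists n. split; auto; lia.
  - intros k Hk. destruct (box_compact d (cell_lo s k) (cell_hi s k) c e (fun _ => True)) as [N HN].
    + intros x Hx. destruct (Hcov k x Hk Hx) as [n Hn]. eauto.
    + exists N. intros x Hx. destruct (HN x Hx) as [n [Hn [_ Ho]]]. eauto.
  - exists N. apply hcells_vol_le_boxes_vol; auto.
    intros k x Hk Hx. destruct (HN k Hk x) as [n [Hn Ho]].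
    + intros j Hj. specialize (Hx j Hj). lra.
    + exists n. split; auto. intros j Hj. specialize (Ho j Hj). lra.
Qed.

Lemma cells_vol_le_cover_sum t :
  (forall k x, In k L -> in_box d (cell_lo s k) (cell_hi s k) x -> A x) ->
  cover_sum d A t -> INR (length L) * prodd d s <= t.
Proof.
  intros Hin [a [b [Hab [Hcov Hsum]]]]. apply le_epsilon. intros eps Heps.
  set (Dn := fun n => INR d * (sumd d (fun j => b n j - a n j) + 1) ^ d).
  assert (HDn : forall n, 0 <= Dn n).
  { intros n. apply Rmult_le_pos; [apply pos_INR | apply pow_le].
    assert (0 <= sumd d (fun j => b n j - a n j)); [|lra].
    apply sumd_ge0. intros j Hj. pose proof (Hab n j Hj). lra. }
  (* enlarge the n-th box by a margin h n whose cost is at most eps / 2^(n+1) *)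
  set (h := fun n => Rmin 1 (eps / (2 ^ (S n) * (Dn n + 1)))).
  assert (Hh : forall n, 0 < h n <= 1).
  { intros n. split; [|apply Rmin_l]. apply Rmin_pos; [lra|]. apply Rdiv_lt_0_compat; auto.
    apply Rmult_lt_0_compat; [apply pow_lt; lra | specialize (HDn n); lra]. }
  assert (HhD : forall n, h n * Dn n <= eps / 2 ^ (S n)).
  { intros n. pose proof (HDn n). pose proof (Hh n). pose proof (pow_lt 2 (S n) ltac:(lra)).
    assert (Hmin : h n <= eps / (2 ^ (S n) * (Dn n + 1))) by apply Rmin_r.
    apply (Rmult_le_compat_r (Dn n + 1)) in Hmin; [|lra].
    replace (eps / (2 ^ S n * (Dn n + 1)) * (Dn n + 1)) with (eps / 2 ^ (S n)) in Hmin by (field; lra).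
    nra. }
  set (c := fun n j => a n j - h n / 2). set (e := fun n j => b n j + h n / 2).
  destruct (cells_vol_le_open_cover c e) as [N HN].
  - intros n j Hj. unfold c, e. pose proof (Hab n j Hj). pose proof (Hh n). lra.
  - intros k x Hk Hx. destruct (Hcov x (Hin k x Hk Hx)) as [n Hn]. exists n.
    intros j Hj. specialize (Hn j Hj). pose proof (Hh n). unfold c, e. lra.
  - eapply Rle_trans; [apply HN|].
    assert (Hbox : sumL (seq 0 N) (fun n => box_vol d (a n) (b n)) <= t)
      by (apply sumL_seq_le_infinite_sum; auto; intros; apply box_vol_ge0; auto).
    assert (Hgeom : sumL (seq 0 N) (fun n => eps * / 2 ^ (S n)) <= eps).
    { rewrite sumL_scal, sumL_seq_geom. pose proof (pow_lt 2 N ltac:(lra)).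
      assert (0 < / 2 ^ N) by (apply Rinv_0_lt_compat; auto). nra. }
    eapply Rle_trans; [| apply Rplus_le_compat; [apply Hbox | apply Hgeom]].
    rewrite <- sumL_plus. apply sumL_le. intros n _.
    eapply Rle_trans; [apply box_vol_widen_le; auto; pose proof (Hh n); lra|].
    pose proof (HhD n). unfold Dn, Rdiv in *. lra.
Qed.

End CellsInside.

(** * Lattice points in the ball *)

Lemma Rabs_le_inv x a : Rabs x <= a -> - a <= x <= a.
Proof. intros H. pose proof (Rle_abs x). pose proof (Rle_abs (- x)). rewrite Rabs_Ropp in *. lra. Qed.

Lemma nth_map_seq d (g : nat -> Z) j : (j < d)%nat -> nth j (map g (seq 0 d)) 0%Z = g j.
Proof.
  intros Hj. rewrite (nth_indep _ _ (g 0%nat)) by (rewrite length_map, length_seq; auto).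
  rewrite map_nth, seq_nth by auto. auto.
Qed.

Lemma prodd_inv_rpow d (c mu : R) (f : nat -> R) : 0 < mu ->
  prodd d (fun j => / rpow mu (c / f j)) = / rpow mu (c * sumd d (fun j => / f j)).
Proof.
  intros Hmu. induction d as [|n IH]; simpl.
  - rewrite Rmult_0_r, rpow_pos, Rpower_O by auto. field.
  - rewrite IH, <- Rinv_mult, <- rpow_plus by auto. f_equal. f_equal. unfold Rdiv. ring.
Qed.

Section Ball.

Variables (d : nat) (Rv : nat -> R).
Hypothesis HR : forall j, (j < d)%nat -> 0 < Rv j.

Let P := pR d Rv.

Lemma ball2R_iff x : ball2R d Rv x <-> gauge d Rv x <= 1.
Proof. rewrite gauge_le_iff, rpow_1l by lra. reflexivity. Qed.

Lemma latset_iff m k : latset d Rv m k <-> length k = d /\ gauge d Rv (kvec k) <= INR m.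
Proof. rewrite gauge_le_iff by apply pos_INR. reflexivity. Qed.

Lemma latset_enum m : exists l, NoDup l /\ forall k, In k l <-> latset d Rv m k.
Proof.
  set (T := rpow (INR m) (2 * P)).
  destruct (INR_unbounded (sumd d (fun j => rpow T (/ (2 * Rv j))))) as [M HM].
  set (test := fun k => if Rle_dec (ballsum d Rv (kvec k)) T then true else false).
  exists (filter test (tuples d (zrange M))). split; [apply NoDup_filter, tuples_NoDup, zrange_NoDup|].
  intros k. rewrite filter_In, in_tuples. unfold latset. fold P T.
  change (sumd d (fun j => rpow (Rabs (IZR (nth j k 0%Z))) (2 * Rv j))) with (ballsum d Rv (kvec k)).
  unfold test. destruct (Rle_dec (ballsum d Rv (kvec k)) T) as [Hle|Hle]; [|split; intuition discriminate].
  split; [intros [[H1 _] _]; auto|]. intros [H1 H2]. repeat split; auto.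
  intros j Hj. apply in_zrange.
  (* |k_j|^(2 R_j) <= m^(2p) bounds every coordinate *)
  assert (Habs : Rabs (kvec k j) <= INR M).
  { pose proof (HR j Hj). apply Rlt_le. eapply Rle_lt_trans; [|apply HM].
    eapply Rle_trans; [| apply (sumd_term_le d (fun j => rpow T (/ (2 * Rv j))) j);
      auto; intros; apply rpow_ge0].
    apply rpow_le_iff; [lra | apply Rabs_pos | apply rpow_ge0 |].
    eapply Rle_trans; [| apply Hle].
    apply (sumd_term_le d (fun j => rpow (Rabs (kvec k j)) (2 * Rv j))); auto.
    intros; apply rpow_ge0. }
  unfold kvec in Habs. rewrite INR_IZR_INZ in Habs. apply Rabs_le_inv in Habs.
  split; apply le_IZR; rewrite ?opp_IZR; lra.
Qed.

(* the side lengths of a unit cell pulled back by the dilation of ratio [mu] *)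
Definition dil_side (mu : R) : nat -> R := fun j => / rpow mu (P / Rv j).

Lemma dil_side_gt0 mu j : 0 < mu -> 0 < dil_side mu j.
Proof. intros. apply Rinv_0_lt_compat, rpow_gt0; auto. Qed.

Lemma prodd_dil_side mu : 0 < mu -> prodd d (dil_side mu) = / rpow mu (P / gR d Rv).
Proof.
  intros Hmu. unfold dil_side, gR. rewrite prodd_inv_rpow by auto.
  unfold Rdiv. rewrite Rinv_inv. auto.
Qed.

Lemma in_cell_dil_side mu k x : 0 < mu ->
  in_box d (cell_lo (dil_side mu) k) (cell_hi (dil_side mu) k) x <->
  forall j, (j < d)%nat -> Rabs (rpow mu (P / Rv j) * x j - kvec k j) <= / 2.
Proof.
  intros Hmu. unfold in_box, cell_lo, cell_hi, dil_side.
  split; intros H j Hj; specialize (H j Hj); pose proof (rpow_gt0 mu (P / Rv j) Hmu);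
    set (l := rpow mu (P / Rv j)) in *.
  - apply Rabs_le. destruct H as [H1 H2].
    apply (Rmult_le_compat_l l) in H1, H2; try lra.
    replace (l * ((kvec k j - / 2) * / l)) with (kvec k j - / 2) in H1 by (field; lra).
    replace (l * ((kvec k j + / 2) * / l)) with (kvec k j + / 2) in H2 by (field; lra). lra.
  - apply Rabs_le_inv in H. replace (x j) with ((l * x j) * / l) by (field; lra).
    split; apply Rmult_le_compat_r; try (left; apply Rinv_0_lt_compat); lra.
Qed.

Lemma ball_in_dil_cells m l mu : 0 < mu -> mu + bR d Rv = INR m ->
  (forall k, In k l <-> latset d Rv m k) ->
  forall x, ball2R d Rv x -> exists k, In k l /\ in_box d (cell_lo (dil_side mu) k) (cell_hi (dil_side mu) k) x.
Proof.
  intros Hmu Hm Hl x Hx. apply ball2R_iff in Hx.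
  set (y := fun j => rpow mu (P / Rv j) * x j).
  (* round the dilated point [y] to the nearest lattice point *)
  set (k := map (fun j => (up (y j + / 2) - 1)%Z) (seq 0 d)).
  assert (Hk : forall j, (j < d)%nat -> Rabs (kvec k j - y j) <= / 2).
  { intros j Hj. unfold kvec, k.
    rewrite nth_map_seq, minus_IZR by auto. destruct (archimed (y j + / 2)).
    apply Rabs_le. simpl. lra. }
  exists k. split; [|apply in_cell_dil_side; auto; intros j Hj; rewrite Rabs_minus_sym; auto].
  apply Hl, latset_iff. split; [unfold k; rewrite length_map, length_seq; auto|].
  pose proof (gauge_near d Rv HR (kvec k) y Hk). pose proof (gauge_dilate d Rv HR x mu Hmu).
  pose proof (gauge_ge0 d Rv x). fold P y in H0. nra.
Qed.

Lemma dil_cells_in_ball m mu k x : 0 < mu -> mu = INR m + bR d Rv -> latset d Rv m k ->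
  in_box d (cell_lo (dil_side mu) k) (cell_hi (dil_side mu) k) x -> ball2R d Rv x.
Proof.
  intros Hmu Hm Hk Hx. rewrite in_cell_dil_side in Hx by auto.
  apply latset_iff in Hk. destruct Hk as [_ Hk]. apply ball2R_iff.
  set (y := fun j => rpow mu (P / Rv j) * x j).
  assert (Hy : gauge d Rv y <= mu).
  { pose proof (gauge_near d Rv HR y (kvec k) Hx). lra. }
  pose proof (gauge_dilate d Rv HR x mu Hmu). fold P y in H.
  apply (Rmult_le_reg_l mu); auto. lra.
Qed.

Lemma ball_cover_exists : (1 <= d)%nat -> exists s, cover_sum d (ball2R d Rv) s.
Proof.
  intros Hd. set (cube := ((fun _ : nat => -1), (fun _ : nat => 1))).
  eexists. apply (cover_sum_finite d _ (cube :: nil)); auto.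
  - intros p [<-|[]] j Hj. simpl. lra.
  - intros x Hx. exists cube. split; [left; auto|]. intros j Hj. simpl.
    assert (Hj1 : rpow (Rabs (x j)) (2 * Rv j) <= 1).
    { eapply Rle_trans; [| apply Hx].
      apply (sumd_term_le d (fun j => rpow (Rabs (x j)) (2 * Rv j))); auto. intros; apply rpow_ge0. }
    pose proof (HR j Hj). apply rpow_le_iff in Hj1; [| lra | apply Rabs_pos | lra].
    rewrite rpow_1l in Hj1. apply Rabs_le_inv; auto.
Qed.

Lemma scaled_vol_le_count m l v : (1 <= d)%nat -> lebesgue_measure d (ball2R d Rv) v ->
  (forall k, In k l <-> latset d Rv m k) ->
  rpow (Rmax (INR m - bR d Rv) 0) (P / gR d Rv) * v <= INR (length l).
Proof.
  intros Hd [Hv _] Hl. destruct (Rle_lt_dec (INR m - bR d Rv) 0) as [Hneg|Hpos].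
  - rewrite Rmax_right, rpow_0, Rmult_0_l by lra. apply pos_INR.
  - rewrite Rmax_left by lra. set (mu := INR m - bR d Rv) in *.
    assert (Hcov := cover_sum_cells d (dil_side mu) _ l Hd (fun j _ => dil_side_gt0 mu j Hpos)
                      (ball_in_dil_cells m l mu Hpos ltac:(unfold mu; ring) Hl)).
    apply Hv in Hcov. rewrite prodd_dil_side in Hcov by auto.
    pose proof (rpow_gt0 mu (P / gR d Rv) Hpos).
    apply (Rmult_le_compat_l (rpow mu (P / gR d Rv))) in Hcov; [|lra].
    replace (rpow mu (P / gR d Rv) * (INR (length l) * / rpow mu (P / gR d Rv)))
      with (INR (length l)) in Hcov by (field; lra). auto.
Qed.

Lemma count_le_scaled_vol m l v : (1 <= m)%nat -> lebesgue_measure d (ball2R d Rv) v ->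
  NoDup l -> (forall k, In k l <-> latset d Rv m k) ->
  INR (length l) <= rpow (INR m + bR d Rv) (P / gR d Rv) * v.
Proof.
  intros Hm [_ Hv] Hnd Hl. set (mu := INR m + bR d Rv).
  assert (Hmu : 0 < mu) by (pose proof (bR_ge0 d Rv); apply (le_INR 1) in Hm; unfold mu; simpl in Hm; lra).
  assert (Hcount : INR (length l) * prodd d (dil_side mu) <= v).
  { apply Hv. intros t Ht. apply (cells_vol_le_cover_sum d (dil_side mu) l (ball2R d Rv)); auto.
    - intros j _. apply dil_side_gt0; auto.
    - intros k Hk. apply Hl in Hk. apply Hk.
    - intros k x Hk Hx. apply Hl in Hk. apply (dil_cells_in_ball m mu k x); auto. }
  rewrite prodd_dil_side in Hcount by auto.
  pose proof (rpow_gt0 mu (P / gR d Rv) Hmu).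
  apply (Rmult_le_compat_l (rpow mu (P / gR d Rv))) in Hcount; [|lra].
  replace (rpow mu (P / gR d Rv) * (INR (length l) * / rpow mu (P / gR d Rv)))
    with (INR (length l)) in Hcount by (field; lra). auto.
Qed.

End Ball.

Theorem mainTheorem9 :
  forall (d : nat) (Rv : nat -> R),
    (1 <= d)%nat ->
    (forall j, (j < d)%nat -> 0 < Rv j) ->
    forall m : nat, (1 <= m)%nat ->
    exists (vol : R) (C : nat),
      lebesgue_measure d (ball2R d Rv) vol /\
      has_card (latset d Rv m) C /\
      rpow (Rmax (INR m - bR d Rv) 0) (pR d Rv / gR d Rv) * vol <= INR C /\
      INR C <= rpow (INR m + bR d Rv) (pR d Rv / gR d Rv) * vol.
Proof.
  intros d Rv Hd HR m Hm.
  destruct (latset_enum d Rv HR m) as [l [Hnd Hl]].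
  destruct (lebesgue_measure_exists d (ball2R d Rv) (ball_cover_exists d Rv HR Hd)) as [v Hv].
  exists v, (length l). split; [exact Hv|]. split; [exists l; auto|].
  split; [apply scaled_vol_le_count | apply count_le_scaled_vol]; auto.
Qed.
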